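(* Let $x,y$ be elements both lying in $A$ or both lying in $B$, with $x,y\notin H$, and suppose $x=c^{\alpha}d^{\beta}yc^{\gamma}d^{\delta}$ for some integers $\alpha,\beta,\gamma,\delta$. If $x,y\in A$, then the integers $\alpha+\gamma$, $\beta$ and $\delta$ are uniquely determined by this equality (i.e. any two such representations give the same values). If $x,y\in B$, then $\beta+\delta$, $\alpha$ and $\gamma$ are uniquely determined by this equality.
   Context: Fix integers $m,n>1$ and let $G_{mn}=\langle a,b;\ [a^m,b^n]=1\rangle$. Put $c=a^m$, $d=b^n$, $H=\langle c,d\rangle$ (free abelian with basis $c,d$), $A=\langle a,H\rangle$, $B=\langle b,H\rangle$. *)

(* The group G_mn = < a, b ; [a^m, b^n] = 1 > is modelled
   concretely: elements are words in a^{+-1}, b^{+-1}, and equality in G_mn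
   is the congruence generated by free cancellation and the relator. *)
From Stdlib Require Import List ZArith.
Import ListNotations.
Open Scope Z_scope.

Inductive gen := Ga | Gb.
(* a letter is a generator together with a flag "inverted" *)
Definition letter := (gen * bool)%type.
Definition word := list letter.

Definition inv_letter (l : letter) : letter := (fst l, negb (snd l)).
Definition winv (w : word) : word := rev (map inv_letter w).

Fixpoint wpow_nat (w : word) (k : nat) : word :=
  match k with O => [] | S k' => w ++ wpow_nat w k' end.

Definition wpow (w : word) (z : Z) : word :=
  if Z.leb 0 z then wpow_nat w (Z.to_nat z) else wpow_nat (winv w) (Z.to_nat (- z)).

Definition wa : word := [(Ga, false)].
Definition wb : word := [(Gb, false)].

Definition wcomm (x y : word) : word := winv x ++ winv y ++ x ++ y.

Definition wc (m : nat) : word := wpow wa (Z.of_nat m).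
Definition wd (n : nat) : word := wpow wb (Z.of_nat n).

Definition relator (m n : nat) : word := wcomm (wc m) (wd n).

Inductive geq (m n : nat) : word -> word -> Prop :=
| geq_refl w : geq m n w w
| geq_sym u v : geq m n u v -> geq m n v u
| geq_trans u v w : geq m n u v -> geq m n v w -> geq m n u w
| geq_cancel u v l : geq m n (u ++ l :: inv_letter l :: v) (u ++ v)
| geq_rel u v : geq m n (u ++ relator m n ++ v) (u ++ v).

Inductive in_subgroup (m n : nat) (gens : list word) : word -> Prop :=
| sub_one x : geq m n x [] -> in_subgroup m n gens x
| sub_gen g y x : In g gens -> in_subgroup m n gens y ->
    geq m n x (g ++ y) -> in_subgroup m n gens x
| sub_geninv g y x : In g gens -> in_subgroup m n gens y ->
    geq m n x (winv g ++ y) -> in_subgroup m n gens x.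

Definition inH (m n : nat) := in_subgroup m n [wc m; wd n].
Definition inA (m n : nat) := in_subgroup m n [wa; wc m; wd n].
Definition inB (m n : nat) := in_subgroup m n [wb; wc m; wd n].

Definition twisted (m n : nat) (y : word) (al be ga de : Z) : word :=
  wpow (wc m) al ++ wpow (wd n) be ++ y ++ wpow (wc m) ga ++ wpow (wd n) de.

From Stdlib Require Import List ZArith Lia Setoid Morphisms.
Import ListNotations.
Open Scope Z_scope.

(* The exponent sum of [a] (resp. [b]) is invariant in [G_mn] and kills [d]
   (resp. [c]); it determines [alpha + gamma] (resp. [beta + delta]).

   For the other exponents, in case [A] map [G_mn] onto the free product
   [Z/m * Z = <t> * <s>] by [a |-> t], [b |-> s]; this kills [c], and [d] becomes [s^n].
   Let [G_mn] act through this map on the left cosets of [<s>], given by their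
   reduced forms.  Every element of [A] is the word read off the reduced form of
   its coset times an element of [H], so [y] in [A \ H] moves the coset [<s>],
   and then [x <s> = d^beta y <s>] determines [beta] ([s^k] fixes no coset
   other than [<s>] when [k <> 0]).  Applying this to [x^-1] determines [delta].
   Case [B] is the same argument with the roles of [a, c] and [b, d] exchanged. *)

Lemma geq_app_l m n w u v : geq m n u v -> geq m n (w ++ u) (w ++ v).
Proof.
  induction 1.
  - apply geq_refl.
  - now apply geq_sym.
  - eapply geq_trans; eauto.
  - rewrite !(app_assoc w). apply geq_cancel.
  - rewrite !(app_assoc w). apply geq_rel.
Qed.

Lemma geq_app_r m n w u v : geq m n u v -> geq m n (u ++ w) (v ++ w).
Proof.
  induction 1.
  - apply geq_refl.
  - now apply geq_sym.
  - eapply geq_trans; eauto.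
  - rewrite <- !app_assoc. apply geq_cancel.
  - rewrite <- !app_assoc. apply geq_rel.
Qed.

#[export] Instance geq_Equivalence m n : Equivalence (geq m n).
Proof. split; [exact (geq_refl m n) | exact (geq_sym m n) | exact (geq_trans m n)]. Qed.

#[export] Instance app_geq_Proper m n : Proper (geq m n ==> geq m n ==> geq m n) (@app letter).
Proof. intros u u' Hu v v' Hv. transitivity (u' ++ v); auto using geq_app_l, geq_app_r. Qed.

Lemma inv_letterK l : inv_letter (inv_letter l) = l.
Proof. destruct l as [g b]. unfold inv_letter. simpl. now rewrite Bool.negb_involutive. Qed.

Lemma winv_app u v : winv (u ++ v) = winv v ++ winv u.
Proof. unfold winv. now rewrite map_app, rev_app_distr. Qed.

Lemma winv_cons l w : winv (l :: w) = winv w ++ [inv_letter l].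
Proof. reflexivity. Qed.

Lemma winvK w : winv (winv w) = w.
Proof.
  unfold winv. rewrite map_rev, rev_involutive, map_map.
  erewrite map_ext by apply inv_letterK. apply map_id.
Qed.

Section WordGroup.
Variables m n : nat.

Lemma app_winv_r w : geq m n (w ++ winv w) [].
Proof.
  induction w as [|l w IH]; [reflexivity|].
  transitivity ([l] ++ (w ++ winv w) ++ [inv_letter l]).
  { rewrite winv_cons. simpl. rewrite app_assoc. reflexivity. }
  rewrite IH. exact (geq_cancel m n [] [] l).
Qed.

Lemma app_winv_l w : geq m n (winv w ++ w) [].
Proof. rewrite <- (winvK w) at 2. apply app_winv_r. Qed.

Lemma geq_app_cancel_l w u v : geq m n (w ++ u) (w ++ v) -> geq m n u v.
Proof.
  intro H. transitivity (winv w ++ w ++ u).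
  - rewrite app_assoc, app_winv_l. reflexivity.
  - rewrite H, app_assoc, app_winv_l. reflexivity.
Qed.

Lemma geq_app_cancel_r w u v : geq m n (u ++ w) (v ++ w) -> geq m n u v.
Proof.
  intro H. transitivity (u ++ w ++ winv w).
  - rewrite app_winv_r, app_nil_r. reflexivity.
  - rewrite app_assoc, H, <- app_assoc, app_winv_r, app_nil_r. reflexivity.
Qed.

Lemma relator_trivial : geq m n (relator m n) [].
Proof. pose proof (geq_rel m n [] []) as H. now rewrite app_nil_r in H. Qed.

Lemma geq_winv u v : geq m n u v -> geq m n (winv u) (winv v).
Proof.
  induction 1.
  - reflexivity.
  - now symmetry.
  - etransitivity; eauto.
  - rewrite !winv_app, !winv_cons, <- !app_assoc. simpl.
    rewrite inv_letterK. apply geq_cancel.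
  - rewrite !winv_app, <- app_assoc. apply geq_app_l.
    pose proof (geq_rel m n (winv (relator m n)) []) as Hr. rewrite !app_nil_r in Hr.
    rewrite <- Hr, app_winv_l. reflexivity.
Qed.

Lemma wpowS w s : geq m n (wpow w (s + 1)) (w ++ wpow w s).
Proof.
  unfold wpow. destruct (Z.leb_spec 0 s), (Z.leb_spec 0 (s + 1)); try lia.
  - replace (Z.to_nat (s + 1)) with (S (Z.to_nat s)) by lia. reflexivity.
  - replace s with (-1) by lia. simpl. rewrite app_nil_r, app_winv_r. reflexivity.
  - replace (Z.to_nat (- s)) with (S (Z.to_nat (- (s + 1)))) by lia. simpl.
    rewrite app_assoc, app_winv_r. reflexivity.
Qed.

Lemma wpowD w s t : geq m n (wpow w (s + t)) (wpow w s ++ wpow w t).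
Proof.
  revert s. apply Z.peano_ind.
  - reflexivity.
  - intros s IH.
    replace (Z.succ s + t) with (s + t + 1) by lia. replace (Z.succ s) with (s + 1) by lia.
    rewrite !wpowS, IH, app_assoc. reflexivity.
  - intros s IH. apply (geq_app_cancel_l w).
    rewrite app_assoc, <- !wpowS.
    replace (Z.pred s + t + 1) with (s + t) by lia. now replace (Z.pred s + 1) with s by lia.
Qed.

Lemma wpowN w k : geq m n (wpow w (- k)) (winv (wpow w k)).
Proof.
  apply (geq_app_cancel_r (wpow w k)).
  rewrite <- wpowD, app_winv_l, Z.add_opp_diag_l. reflexivity.
Qed.

Lemma wpowM w a k : geq m n (wpow w (a * k)) (wpow (wpow w a) k).
Proof.
  revert k. apply Z.peano_ind.
  - now rewrite Z.mul_0_r.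
  - intros k IH. replace (Z.succ k) with (k + 1) by lia.
    replace (a * (k + 1)) with (a + a * k) by lia.
    rewrite wpowS, wpowD, IH. reflexivity.
  - intros k IH. apply (geq_app_cancel_l (wpow w a)).
    rewrite <- wpowD, <- wpowS.
    replace (a + a * Z.pred k) with (a * k) by lia. now replace (Z.pred k + 1) with k by lia.
Qed.

Lemma winv_twisted X Y a b c d y :
  geq m n (winv (wpow X a ++ wpow Y b ++ y ++ wpow X c ++ wpow Y d))
          (wpow Y (- d) ++ wpow X (- c) ++ winv y ++ wpow Y (- b) ++ wpow X (- a)).
Proof. rewrite !winv_app, !wpowN, <- !app_assoc. reflexivity. Qed.

End WordGroup.

Definition wcommute m n (u v : word) : Prop := geq m n (u ++ v) (v ++ u).

Section Commutation.
Variables m n : nat.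

#[export] Instance wcommute_Proper : Proper (geq m n ==> geq m n ==> iff) (wcommute m n).
Proof. intros u u' Hu v v' Hv. unfold wcommute. now rewrite Hu, Hv. Qed.

Lemma wcommute_nil u : wcommute m n u [].
Proof. unfold wcommute. now rewrite app_nil_r. Qed.

Lemma wcommute_sym u v : wcommute m n u v -> wcommute m n v u.
Proof. unfold wcommute. now symmetry. Qed.

Lemma wcommute_of_wcomm u v : geq m n (wcomm u v) [] -> wcommute m n u v.
Proof.
  unfold wcommute, wcomm. intro H.
  apply (geq_app_cancel_l m n (winv v)), (geq_app_cancel_l m n (winv u)).
  rewrite H, (app_assoc (winv v)), app_winv_l, app_winv_l. reflexivity.
Qed.

Lemma wcommute_app u v1 v2 :
  wcommute m n u v1 -> wcommute m n u v2 -> wcommute m n u (v1 ++ v2).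
Proof.
  unfold wcommute. intros H1 H2.
  rewrite app_assoc, H1, <- app_assoc, H2, app_assoc. reflexivity.
Qed.

Lemma wcommute_winv u v : wcommute m n u v -> wcommute m n u (winv v).
Proof.
  unfold wcommute. intro H. apply (geq_app_cancel_l m n v).
  rewrite app_assoc, <- H, <- app_assoc, app_winv_r, app_assoc, app_winv_r, app_nil_r.
  reflexivity.
Qed.

Lemma wcommute_wpow u v k : wcommute m n u v -> wcommute m n u (wpow v k).
Proof.
  intro H. assert (Hpow : forall w j, wcommute m n u w -> wcommute m n u (wpow_nat w j)).
  { intros w j Hw. induction j; simpl; auto using wcommute_nil, wcommute_app. }
  unfold wpow. destruct (0 <=? k); auto using wcommute_winv.
Qed.

Lemma wcommute_wpow2 u v a b : wcommute m n u v -> wcommute m n (wpow u a) (wpow v b).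
Proof. intro H. apply wcommute_wpow, wcommute_sym, wcommute_wpow, wcommute_sym, H. Qed.

Lemma wcommute_wpow_same w a b : wcommute m n (wpow w a) (wpow w b).
Proof. unfold wcommute. rewrite <- !wpowD, Z.add_comm. reflexivity. Qed.

End Commutation.

Section Subgroups.
Variables (m n : nat) (gens : list word).

#[export] Instance in_subgroup_Proper : Proper (geq m n ==> iff) (in_subgroup m n gens).
Proof.
  assert (Hgeq : forall x x', geq m n x x' -> in_subgroup m n gens x -> in_subgroup m n gens x').
  { intros x x' E Hx. destruct Hx as [x Hx|g y x Hg Hy Hx|g y x Hg Hy Hx].
    - apply sub_one. now rewrite <- E.
    - apply (sub_gen _ _ _ g y); auto. now rewrite <- E.
    - apply (sub_geninv _ _ _ g y); auto. now rewrite <- E. }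
  intros x x' E. split; apply Hgeq; [exact E | now symmetry].
Qed.

Lemma in_subgroup_nil : in_subgroup m n gens [].
Proof. now apply sub_one. Qed.

Lemma in_subgroup_app u v :
  in_subgroup m n gens u -> in_subgroup m n gens v -> in_subgroup m n gens (u ++ v).
Proof.
  intros Hu Hv. induction Hu as [y Hy|g y x Hg _ IH Hx|g y x Hg _ IH Hx].
  - now rewrite Hy.
  - apply (sub_gen _ _ _ g (y ++ v)); auto. now rewrite Hx, app_assoc.
  - apply (sub_geninv _ _ _ g (y ++ v)); auto. now rewrite Hx, app_assoc.
Qed.

Lemma in_subgroup_gen g : In g gens -> in_subgroup m n gens g.
Proof.
  intro Hg. apply (sub_gen _ _ _ g []); [exact Hg | apply in_subgroup_nil |].
  now rewrite app_nil_r.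
Qed.

Lemma in_subgroup_gen_inv g : In g gens -> in_subgroup m n gens (winv g).
Proof.
  intro Hg. apply (sub_geninv _ _ _ g []); [exact Hg | apply in_subgroup_nil |].
  now rewrite app_nil_r.
Qed.

Lemma in_subgroup_wpow g k : In g gens -> in_subgroup m n gens (wpow g k).
Proof.
  intro Hg. unfold wpow. destruct (0 <=? k); induction (Z.to_nat _); simpl;
    auto using in_subgroup_nil, in_subgroup_app, in_subgroup_gen, in_subgroup_gen_inv.
Qed.

Lemma in_subgroup_winv y : in_subgroup m n gens y -> in_subgroup m n gens (winv y).
Proof.
  induction 1 as [y Hy|g y x Hg _ IH Hx|g y x Hg _ IH Hx];
    apply geq_winv in Hx || apply geq_winv in Hy.
  - rewrite Hy. apply in_subgroup_nil.
  - rewrite Hx, winv_app. auto using in_subgroup_app, in_subgroup_gen_inv.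
  - rewrite Hx, winv_app, winvK. auto using in_subgroup_app, in_subgroup_gen.
Qed.

End Subgroups.

Lemma in_subgroup_incl m n gens gens' y : incl gens gens' ->
  in_subgroup m n gens y -> in_subgroup m n gens' y.
Proof.
  intros Hincl. induction 1.
  - now apply sub_one.
  - eapply sub_gen; eauto.
  - eapply sub_geninv; eauto.
Qed.

Definition gen_eqb (g h : gen) : bool :=
  match g, h with Ga, Ga | Gb, Gb => true | _, _ => false end.

Definition letter_exp (g : gen) (l : letter) : Z :=
  if gen_eqb (fst l) g then (if snd l then -1 else 1) else 0.

Definition expsum (g : gen) (w : word) : Z :=
  fold_right (fun l s => letter_exp g l + s) 0 w.

Lemma expsum_cons g l w : expsum g (l :: w) = letter_exp g l + expsum g w.
Proof. reflexivity. Qed.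

Lemma expsum_app g u v : expsum g (u ++ v) = expsum g u + expsum g v.
Proof. induction u as [|l u IH]; [reflexivity|]. rewrite <- app_comm_cons, !expsum_cons, IH. lia. Qed.

Lemma letter_exp_inv g l : letter_exp g (inv_letter l) = - letter_exp g l.
Proof. destruct l as [h b]. unfold letter_exp. simpl. now destruct (gen_eqb h g), b. Qed.

Lemma expsum_winv g w : expsum g (winv w) = - expsum g w.
Proof.
  induction w as [|l w IH]; [reflexivity|].
  rewrite winv_cons, expsum_app, IH, !expsum_cons, letter_exp_inv. simpl. lia.
Qed.

Lemma expsum_wpow g w k : expsum g (wpow w k) = k * expsum g w.
Proof.
  assert (Hnat : forall v j, expsum g (wpow_nat v j) = Z.of_nat j * expsum g v).
  { intros v j. induction j; [reflexivity|]. cbn [wpow_nat]. rewrite expsum_app, IHj. lia. }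
  unfold wpow. destruct (Z.leb_spec 0 k).
  - rewrite Hnat, Z2Nat.id; lia.
  - rewrite Hnat, expsum_winv, Z2Nat.id; lia.
Qed.

Lemma expsum_geq m n g u v : geq m n u v -> expsum g u = expsum g v.
Proof.
  induction 1; try congruence.
  - rewrite !expsum_app, !expsum_cons, letter_exp_inv. lia.
  - unfold relator, wcomm. rewrite !expsum_app, !expsum_winv. lia.
Qed.

(* A state [(i0, [(j1, i1); ...; (jk, ik)])] encodes the left coset
   [t^i0 s^j1 t^i1 ... s^jk t^ik <s>] of the infinite cyclic factor in the free
   product [Z/M * Z = <t> * <s>], written in reduced form; [nf0] is the coset [<s>]. *)
Definition nf := (Z * list (Z * Z))%type.

Definition nf_valid (M : Z) (x : nf) : Prop :=
  0 <= fst x < M /\ Forall (fun p => fst p <> 0 /\ 0 < snd p < M) (snd x).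

Definition nf0 : nf := (0, []).

Definition rot (M k : Z) (x : nf) : nf := ((fst x + k) mod M, snd x).

Definition shift (s : Z) (x : nf) : nf :=
  let (i0, L) := x in
  if s =? 0 then (i0, L) else
  if i0 =? 0 then
    match L with
    | [] => (0, [])
    | (j, i) :: L' => if j + s =? 0 then (i, L') else (0, (j + s, i) :: L')
    end
  else (0, (s, i0) :: L).

Ltac nf_cases :=
  repeat (match goal with |- context [?a =? ?b] => destruct (Z.eqb_spec a b) end; simpl).

Section NormalForms.
Variable M : Z.

Lemma shift0 x : shift 0 x = x.
Proof. now destruct x. Qed.

Lemma shift_nf0 s : shift s nf0 = nf0.
Proof. unfold shift, nf0. now destruct (s =? 0). Qed.

Lemma shift_add a b x : nf_valid M x -> shift a (shift b x) = shift (a + b) x.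
Proof.
  destruct x as [i0 [|[j i] L]]; intros [Hi HL]; simpl in *.
  - unfold shift. nf_cases; subst; try lia; try reflexivity; do 3 f_equal; lia.
  - inversion HL as [|? ? [Hj Hi'] HL']; subst. simpl in *.
    unfold shift. nf_cases; subst; try lia; try reflexivity; do 3 f_equal; lia.
Qed.

Lemma shift_valid s x : nf_valid M x -> nf_valid M (shift s x).
Proof.
  destruct x as [i0 [|[j i] L]]; intros [Hi HL]; simpl in *; unfold shift.
  - nf_cases; split; simpl; auto; try lia; repeat constructor; simpl; lia.
  - inversion HL as [|? ? [Hj Hi'] HL']; subst. simpl in *.
    nf_cases; split; simpl; auto; try lia; repeat constructor; simpl; auto; lia.
Qed.

Lemma shift_inj s s' x : nf_valid M x -> x <> nf0 -> shift s x = shift s' x -> s = s'.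
Proof.
  intros Hx Hx0 E.
  assert (Hfix : shift (s - s') x = x).
  { replace (s - s') with (- s' + s) by lia.
    rewrite <- shift_add, E, shift_add by auto.
    replace (- s' + s') with 0 by lia. apply shift0. }
  revert Hfix. destruct x as [i0 [|[j i] L]]; destruct Hx as [Hi HL]; simpl in *; unfold shift.
  - nf_cases; intro H; inversion H; subst; try lia. now contradiction Hx0.
  - inversion HL as [|? ? [Hj Hi'] HL']; subst. simpl in *.
    nf_cases; intro H; inversion H; lia.
Qed.

Hypothesis M_pos : 0 < M.

Lemma nf0_valid : nf_valid M nf0.
Proof. split; simpl; [lia | constructor]. Qed.

Lemma rot_valid k x : nf_valid M x -> nf_valid M (rot M k x).
Proof. intros [Hi HL]. split; [apply Z.mod_pos_bound; lia | exact HL]. Qed.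

Lemma rot_add a b x : rot M a (rot M b x) = rot M (a + b) x.
Proof. unfold rot. simpl. rewrite Z.add_mod_idemp_l by lia. f_equal; f_equal; lia. Qed.

Lemma rot0 x : nf_valid M x -> rot M 0 x = x.
Proof. destruct x as [i0 L]. intros [Hi _]. unfold rot. simpl in *. now rewrite Z.add_0_r, Z.mod_small. Qed.

Lemma rot_period x : nf_valid M x -> rot M M x = x.
Proof.
  destruct x as [i0 L]. intros [Hi _]. unfold rot. simpl in *.
  replace (i0 + M) with (i0 + 1 * M) by lia. now rewrite Z.mod_add, Z.mod_small by lia.
Qed.

End NormalForms.

Definition gen_word (g : gen) : word := [(g, false)].

Definition other (g : gen) : gen := match g with Ga => Gb | Gb => Ga end.

(* The generator [cg] acts as [t] and the other generator as [s]. *)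
Definition lact (cg : gen) (M : Z) (l : letter) (x : nf) : nf :=
  let e := if snd l then -1 else 1 in
  if gen_eqb (fst l) cg then rot M e x else shift e x.

Definition act (cg : gen) (M : Z) (w : word) (x : nf) : nf := fold_right (lact cg M) x w.

Section Action.
Variables (cg : gen) (M : Z).
Hypothesis M_pos : 0 < M.

Lemma act_app u v x : act cg M (u ++ v) x = act cg M u (act cg M v x).
Proof. apply fold_right_app. Qed.

Lemma act_valid w x : nf_valid M x -> nf_valid M (act cg M w x).
Proof.
  intro Hx. induction w as [|l w IH]; [exact Hx|]. simpl. unfold lact.
  destruct gen_eqb; auto using rot_valid, shift_valid.
Qed.

Lemma lact_inv_letter l x : nf_valid M x -> lact cg M (inv_letter l) (lact cg M l x) = x.
Proof.
  intro Hx. destruct l as [g b]. unfold lact, inv_letter. simpl.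
  destruct (gen_eqb g cg).
  - rewrite rot_add by exact M_pos. replace (_ + _) with 0 by (destruct b; reflexivity).
    now apply rot0.
  - rewrite (shift_add M) by exact Hx. replace (_ + _) with 0 by (destruct b; reflexivity).
    apply shift0.
Qed.

Lemma act_winv_l w x : nf_valid M x -> act cg M (winv w) (act cg M w x) = x.
Proof.
  intro Hx. induction w as [|l w IH]; [reflexivity|].
  rewrite winv_cons, act_app. simpl.
  rewrite lact_inv_letter by now apply act_valid. exact IH.
Qed.

Lemma act_winv_fix w x :
  (forall y, nf_valid M y -> act cg M w y = y) -> nf_valid M x -> act cg M (winv w) x = x.
Proof. intros Hw Hx. rewrite <- (Hw x Hx) at 1. now apply act_winv_l. Qed.

Section PowerAction.
Variable T : Z -> nf -> nf.
Hypothesis T_valid : forall s x, nf_valid M x -> nf_valid M (T s x).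
Hypothesis T_add : forall a b x, nf_valid M x -> T a (T b x) = T (a + b) x.
Hypothesis T0 : forall x, nf_valid M x -> T 0 x = x.

Variables (w : word) (s : Z).
Hypothesis act_w : forall x, nf_valid M x -> act cg M w x = T s x.

Lemma act_winv_of x : nf_valid M x -> act cg M (winv w) x = T (- s) x.
Proof.
  intro Hx. rewrite <- (act_winv_l w (T (- s) x)) by auto.
  rewrite act_w, T_add by auto. now rewrite Z.add_opp_diag_r, T0.
Qed.

Lemma act_wpow_of k x : nf_valid M x -> act cg M (wpow w k) x = T (s * k) x.
Proof.
  assert (Hnat : forall v e j x, nf_valid M x ->
            (forall y, nf_valid M y -> act cg M v y = T e y) ->
            act cg M (wpow_nat v j) x = T (e * Z.of_nat j) x).
  { intros v e j y Hy Hv. induction j as [|j IH]; simpl.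
    - now rewrite Z.mul_0_r, T0.
    - rewrite act_app, IH, Hv, T_add by auto. f_equal. lia. }
  intro Hx. unfold wpow. destruct (Z.leb_spec 0 k).
  - rewrite (Hnat w s), Z2Nat.id by auto. reflexivity.
  - rewrite (Hnat (winv w) (- s)), Z2Nat.id by (lia || auto using act_winv_of).
    f_equal. lia.
Qed.

End PowerAction.

Lemma act_gen_wpow t x : nf_valid M x -> act cg M (wpow (gen_word cg) t) x = rot M t x.
Proof.
  intro Hx. rewrite (act_wpow_of (rot M)) with (s := 1); auto using rot_valid, rot_add, rot0.
  - now rewrite Z.mul_1_l.
  - intros y _. unfold act, lact. simpl. now destruct cg.
Qed.

End Action.

Definition Cw (cg : gen) (M : Z) : word := wpow (gen_word cg) M.
Definition Fw (cg : gen) (N : Z) : word := wpow (gen_word (other cg)) N.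

(* Reads [x] back as a word, [s^j] becoming [Fw cg N ^ (j / N)]; the
   [s]-exponents of the cosets reached from [nf0] by [<gen_word cg, Cw cg M, Fw cg N>]
   are multiples of [N]. *)
Definition nf_word (cg : gen) (N : Z) (x : nf) : word :=
  wpow (gen_word cg) (fst x) ++
  concat (map (fun p => wpow (Fw cg N) (fst p / N) ++ wpow (gen_word cg) (snd p)) (snd x)).

Section CosetAction.
Variables (m n : nat) (cg : gen) (M N : Z).
Hypotheses (M_pos : 0 < M) (N_pos : 0 < N).
Hypothesis relator_CF :
  relator m n = wcomm (Cw cg M) (Fw cg N) \/ relator m n = wcomm (Fw cg N) (Cw cg M).

Local Notation tw := (gen_word cg).
Local Notation C := (Cw cg M).
Local Notation F := (Fw cg N).
Local Notation Agens := [gen_word cg; Cw cg M; Fw cg N].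
Local Notation Hgens := [Cw cg M; Fw cg N].

Let valid0 : nf_valid M nf0. Proof. exact (nf0_valid M M_pos). Qed.

Let shift_add_M a b y : nf_valid M y -> shift a (shift b y) = shift (a + b) y.
Proof. apply shift_add. Qed.

Lemma wcommute_CF : wcommute m n C F.
Proof.
  destruct relator_CF as [E|E]; [|apply wcommute_sym];
    apply wcommute_of_wcomm; rewrite <- E; apply relator_trivial.
Qed.

Lemma act_C x : nf_valid M x -> act cg M C x = x.
Proof. intro Hx. unfold Cw. rewrite act_gen_wpow by auto. now apply rot_period. Qed.

Lemma act_C_wpow k x : nf_valid M x -> act cg M (wpow C k) x = x.
Proof. apply (act_wpow_of cg M M_pos (fun _ y => y)); auto using act_C. Qed.

Lemma act_F x : nf_valid M x -> act cg M F x = shift N x.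
Proof.
  intro Hx. unfold Fw. rewrite (act_wpow_of cg M M_pos shift) with (s := 1);
    auto using shift_valid, shift0.
  - now rewrite Z.mul_1_l.
  - intros z _. unfold act, lact. simpl. now destruct cg.
Qed.

Lemma act_F_wpow k x : nf_valid M x -> act cg M (wpow F k) x = shift (N * k) x.
Proof. apply (act_wpow_of cg M M_pos shift); auto using shift_valid, shift0, act_F. Qed.

Lemma act_relator x : nf_valid M x -> act cg M (relator m n) x = x.
Proof.
  intro Hx. assert (HCinv : forall y, nf_valid M y -> act cg M (winv C) y = y)
    by auto using act_winv_fix, act_C.
  destruct relator_CF as [E|E]; rewrite E; unfold wcomm; rewrite !act_app.
  - rewrite act_C, HCinv by auto using act_valid. now apply act_winv_l.
  - rewrite (act_C x), HCinv by auto using act_valid. now apply act_winv_l.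
Qed.

Lemma act_geq u v x : geq m n u v -> nf_valid M x -> act cg M u x = act cg M v x.
Proof.
  intro E. revert x. induction E; intros x Hx; auto.
  - symmetry. auto.
  - rewrite IHE1; auto.
  - rewrite !act_app. simpl. f_equal.
    rewrite <- (inv_letterK l) at 1. apply lact_inv_letter; auto using act_valid.
  - rewrite !act_app. f_equal. apply act_relator. auto using act_valid.
Qed.

Lemma wcommute_C_nf_tail q L :
  wcommute m n (wpow C q)
    (concat (map (fun p => wpow F (fst p / N) ++ wpow tw (snd p)) L)).
Proof.
  induction L as [|p L IH]; simpl; [apply wcommute_nil|].
  repeat apply wcommute_app; auto.
  - apply wcommute_wpow2, wcommute_CF.
  - unfold Cw. rewrite <- wpowM. apply wcommute_wpow_same.
Qed.

Lemma nf_word_rot k x : exists h, in_subgroup m n Hgens h /\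
  geq m n (wpow tw k ++ nf_word cg N x) (nf_word cg N (rot M k x) ++ h).
Proof.
  destruct x as [i0 L]. unfold nf_word, rot. simpl.
  exists (wpow C ((i0 + k) / M)). split; [apply in_subgroup_wpow; simpl; auto|].
  rewrite app_assoc, <- wpowD, (Z.add_comm k i0).
  rewrite (Z.div_mod (i0 + k) M) at 1 by lia.
  rewrite Z.add_comm, wpowD, wpowM, <- !app_assoc.
  apply geq_app_l, wcommute_C_nf_tail.
Qed.

Lemma nf_word_shift k x : exists h, in_subgroup m n Hgens h /\
  geq m n (wpow F k ++ nf_word cg N x) (nf_word cg N (shift (N * k) x) ++ h).
Proof.
  destruct x as [i0 L]. unfold shift.
  destruct (Z.eqb_spec (N * k) 0).
  { replace k with 0 by nia. exists []. split; [apply in_subgroup_nil | now rewrite app_nil_r]. }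
  destruct (Z.eqb_spec i0 0) as [->|Hi0].
  - destruct L as [|[j i] L].
    + exists (wpow F k). split; [apply in_subgroup_wpow; simpl; auto|].
      unfold nf_word. simpl. now rewrite !app_nil_r.
    + exists []. split; [apply in_subgroup_nil|]. rewrite app_nil_r. unfold nf_word. simpl.
      destruct (Z.eqb_spec (j + N * k) 0) as [Hj|Hj]; simpl.
      * replace (j / N) with (- k) by (replace j with (- k * N) by lia; rewrite Z.div_mul; lia).
        rewrite !app_assoc, <- wpowD, Z.add_opp_diag_r. reflexivity.
      * replace ((j + N * k) / N) with (k + j / N)
          by (rewrite Z.mul_comm, Z.div_add; lia).
        rewrite wpowD, <- !app_assoc. reflexivity.
  - exists []. split; [apply in_subgroup_nil|]. rewrite app_nil_r. unfold nf_word. simpl.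
    replace (N * k / N) with k by (rewrite Z.mul_comm, Z.div_mul; lia).
    rewrite <- !app_assoc. reflexivity.
Qed.

Definition nf_decomposable (y : word) : Prop :=
  exists h, in_subgroup m n Hgens h /\ geq m n y (nf_word cg N (act cg M y nf0) ++ h).

Lemma nf_decomposable_geq y y' : geq m n y y' -> nf_decomposable y -> nf_decomposable y'.
Proof.
  intros E [h [Hh Hy]]. exists h. split; [exact Hh|].
  rewrite <- (act_geq _ _ _ E valid0), <- E. exact Hy.
Qed.

Lemma nf_decomposable_rot k y : nf_decomposable y -> nf_decomposable (wpow tw k ++ y).
Proof.
  intros [h [Hh Hy]]. destruct (nf_word_rot k (act cg M y nf0)) as [h' [Hh' E]].
  exists (h' ++ h). split; [now apply in_subgroup_app|].
  rewrite act_app, act_gen_wpow by auto using act_valid.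
  rewrite Hy at 1. now rewrite app_assoc, E, app_assoc.
Qed.

Lemma nf_decomposable_shift k y : nf_decomposable y -> nf_decomposable (wpow F k ++ y).
Proof.
  intros [h [Hh Hy]]. destruct (nf_word_shift k (act cg M y nf0)) as [h' [Hh' E]].
  exists (h' ++ h). split; [now apply in_subgroup_app|].
  rewrite act_app, act_F_wpow by auto using act_valid.
  rewrite Hy at 1. now rewrite app_assoc, E, app_assoc.
Qed.

Lemma nf_decomposable_gen_wpow g k y :
  In g Agens -> nf_decomposable y -> nf_decomposable (wpow g k ++ y).
Proof.
  intros [<-|[<-|[<-|[]]]] Hy.
  - now apply nf_decomposable_rot.
  - apply nf_decomposable_geq with (wpow tw (M * k) ++ y); [now rewrite wpowM|].
    now apply nf_decomposable_rot.
  - now apply nf_decomposable_shift.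
Qed.

Lemma nf_decomposition y : in_subgroup m n Agens y -> nf_decomposable y.
Proof.
  induction 1 as [y Hy|g y x Hg _ IH Hx|g y x Hg _ IH Hx].
  - exists []. split; [apply in_subgroup_nil|].
    rewrite (act_geq _ _ _ Hy valid0). exact Hy.
  - apply nf_decomposable_geq with (wpow g 1 ++ y).
    + rewrite Hx. change (wpow g 1) with (g ++ []). now rewrite app_nil_r.
    + now apply nf_decomposable_gen_wpow.
  - apply nf_decomposable_geq with (wpow g (-1) ++ y).
    + rewrite Hx. change (wpow g (-1)) with (winv g ++ []). now rewrite app_nil_r.
    + now apply nf_decomposable_gen_wpow.
Qed.

Lemma act_nf0_moved y :
  in_subgroup m n Agens y -> ~ in_subgroup m n Hgens y -> act cg M y nf0 <> nf0.
Proof.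
  intros Hy HyH E. destruct (nf_decomposition y Hy) as [h [Hh Hyh]].
  apply HyH. rewrite Hyh, E. exact Hh.
Qed.

Lemma shift_act_inj y s s' :
  in_subgroup m n Agens y -> ~ in_subgroup m n Hgens y ->
  shift s (act cg M y nf0) = shift s' (act cg M y nf0) -> s = s'.
Proof. intros Hy HyH. apply (shift_inj M); auto using act_valid, act_nf0_moved. Qed.

Lemma act_twisted_CF a b c d y :
  act cg M (wpow C a ++ wpow F b ++ y ++ wpow C c ++ wpow F d) nf0
  = shift (N * b) (act cg M y nf0).
Proof.
  rewrite !act_app, (act_F_wpow d), shift_nf0, (act_C_wpow c), (act_C_wpow a), (act_F_wpow b);
    auto using act_valid, shift_valid.
Qed.

Lemma twisted_FC_CF a b c d y :
  geq m n (wpow F a ++ wpow C b ++ y ++ wpow F c ++ wpow C d)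
          (wpow C b ++ wpow F a ++ y ++ wpow C d ++ wpow F c).
Proof.
  assert (Hab := wcommute_wpow2 m n _ _ b a wcommute_CF).
  assert (Hcd := wcommute_wpow2 m n _ _ d c wcommute_CF).
  unfold wcommute in Hab, Hcd.
  rewrite app_assoc, <- Hab, <- !app_assoc, <- Hcd. reflexivity.
Qed.

Lemma twisted_CF_unique a b c d a' b' c' d' y :
  in_subgroup m n Agens y -> ~ in_subgroup m n Hgens y ->
  geq m n (wpow C a ++ wpow F b ++ y ++ wpow C c ++ wpow F d)
          (wpow C a' ++ wpow F b' ++ y ++ wpow C c' ++ wpow F d') ->
  b = b' /\ d = d'.
Proof.
  intros Hy HyH E. split.
  - pose proof (act_geq _ _ _ E valid0) as Eb. rewrite !act_twisted_CF in Eb.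
    apply shift_act_inj in Eb; auto. nia.
  - apply geq_winv in E. rewrite !winv_twisted, !twisted_FC_CF in E.
    pose proof (act_geq _ _ _ E valid0) as Ed. rewrite !act_twisted_CF in Ed.
    apply shift_act_inj in Ed; auto using in_subgroup_winv.
    + nia.
    + intro H. apply HyH. rewrite <- winvK. now apply in_subgroup_winv.
Qed.

Lemma twisted_FC_unique a b c d a' b' c' d' y :
  in_subgroup m n Agens y -> ~ in_subgroup m n Hgens y ->
  geq m n (wpow F a ++ wpow C b ++ y ++ wpow F c ++ wpow C d)
          (wpow F a' ++ wpow C b' ++ y ++ wpow F c' ++ wpow C d') ->
  a = a' /\ c = c'.
Proof. rewrite !twisted_FC_CF. apply twisted_CF_unique. Qed.

End CosetAction.

Section Twisted.
Variables (m n : nat) (y : word).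

Lemma expsum_twisted g al be ga de :
  expsum g (twisted m n y al be ga de)
  = (al + ga) * Z.of_nat m * expsum g wa + (be + de) * Z.of_nat n * expsum g wb + expsum g y.
Proof. unfold twisted, wc, wd. rewrite !expsum_app, !expsum_wpow. lia. Qed.

Lemma twisted_expsum_a al be ga de al' be' ga' de' : (0 < m)%nat ->
  geq m n (twisted m n y al be ga de) (twisted m n y al' be' ga' de') -> al + ga = al' + ga'.
Proof.
  intros Hm E. apply (expsum_geq m n Ga) in E. rewrite !expsum_twisted in E.
  change (expsum Ga wa) with 1 in E. change (expsum Ga wb) with 0 in E. nia.
Qed.

Lemma twisted_expsum_b al be ga de al' be' ga' de' : (0 < n)%nat ->
  geq m n (twisted m n y al be ga de) (twisted m n y al' be' ga' de') -> be + de = be' + de'.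
Proof.
  intros Hn E. apply (expsum_geq m n Gb) in E. rewrite !expsum_twisted in E.
  change (expsum Gb wa) with 0 in E. change (expsum Gb wb) with 1 in E. nia.
Qed.

End Twisted.

Theorem lemma1 (m n : nat) (Hm : (1 < m)%nat) (Hn : (1 < n)%nat) (x y : word) :
  ~ inH m n x -> ~ inH m n y ->
  ((inA m n x -> inA m n y ->
    forall al be ga de al' be' ga' de' : Z,
      geq m n x (twisted m n y al be ga de) ->
      geq m n x (twisted m n y al' be' ga' de') ->
      al + ga = al' + ga' /\ be = be' /\ de = de')
  /\
   (inB m n x -> inB m n y ->
    forall al be ga de al' be' ga' de' : Z,
      geq m n x (twisted m n y al be ga de) ->
      geq m n x (twisted m n y al' be' ga' de') ->
      be + de = be' + de' /\ al = al' /\ ga = ga')).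
Proof.
  intros _ HyH. split.
  - intros _ HyA al be ga de al' be' ga' de' E E'. rewrite E in E'.
    split; [exact (twisted_expsum_a m n y _ _ _ _ _ _ _ _ ltac:(lia) E')|].
    apply (twisted_CF_unique m n Ga (Z.of_nat m) (Z.of_nat n) ltac:(lia) ltac:(lia)
             (or_introl eq_refl) al be ga de al' be' ga' de' y HyA HyH E').
  - intros _ HyB al be ga de al' be' ga' de' E E'. rewrite E in E'.
    split; [exact (twisted_expsum_b m n y _ _ _ _ _ _ _ _ ltac:(lia) E')|].
    apply (twisted_FC_unique m n Gb (Z.of_nat n) (Z.of_nat m) ltac:(lia) ltac:(lia)
             (or_intror eq_refl) al be ga de al' be' ga' de' y).
    + revert HyB. apply in_subgroup_incl. intros g. simpl. tauto.
    + intro HyH'. apply HyH. revert HyH'. apply in_subgroup_incl. intros g. simpl. tauto.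
    + exact E'.
Qed.
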